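(* There exists a universal constant $A\ge1$ such that for every infinite finitely generated group $\Gamma$ and every finite symmetric generating set $S$ of $\Gamma$, there is a configuration $\xi\in\{0,1\}^\Gamma$ such that for every integer $k\ge1$ and all $g,h\in\Gamma$ with $d_S(g,h)=k$, there exists $t\in\Gamma$ with $|t|_S\le kA$ and $\xi(gt)\neq\xi(ht)$.
   Context: $d_S$ is the word metric of the right Cayley graph $\mathrm{Cay}(\Gamma,S)$ (edges $\{g,gs\}$, $s\in S$), and $|t|_S=d_S(t,1_\Gamma)$. *)

From Stdlib Require Export Reals List.
Set Implicit Arguments.

Record Group := {
  carrier :> Type;
  gmul : carrier -> carrier -> carrier;
  gone : carrier;
  ginv : carrier -> carrier;
  gmul_assoc : forall x y z, gmul x (gmul y z) = gmul (gmul x y) z;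
  gmul_1l : forall x, gmul gone x = x;
  gmul_1r : forall x, gmul x gone = x;
  gmul_Vl : forall x, gmul (ginv x) x = gone;
  gmul_Vr : forall x, gmul x (ginv x) = gone
}.

Section Defs.
Context {G : Group}.

Fixpoint wprod (w : list G) : G :=
  match w with nil => gone G | s :: w' => gmul G s (wprod w') end.

Definition word_in (S : list G) (w : list G) : Prop := forall s, In s w -> In s S.

Definition symmetric (S : list G) : Prop := forall s, In s S -> In (ginv G s) S.

Definition generates (S : list G) : Prop :=
  forall g : G, exists w, word_in S w /\ wprod w = g.

Definition infinite_group : Prop := ~ exists l : list G, forall g : G, In g l.

(* d_S(g,h) = n in the right Cayley graph (edges {g, g s}):
   n is the least length of a word w over S with g * w = h *)
Definition dist_eq (S : list G) (g h : G) (n : nat) : Prop :=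
  (exists w, word_in S w /\ length w = n /\ gmul G g (wprod w) = h) /\
  (forall w, word_in S w -> gmul G g (wprod w) = h -> n <= length w).

Definition wlen_eq (S : list G) (t : G) (n : nat) : Prop := dist_eq S t (gone G) n.
End Defs.

From Stdlib Require Import Reals List Lia Lra Bool ZArith Wf_nat.
From Stdlib Require Import Classical ClassicalEpsilon.
From Stdlib Require Cantor.
Import ListNotations.

(* Colour the elements of the group by independent fair bits.  For [g] and
   [c <> 1] with [|c| = k], choose [T_c] in the ball of radius [1000 k], of at
   least a third of its size, such that the pairs [{t, c t}] ([t] in [T_c]) are
   pairwise disjoint.  The bad event "[g t] and [g c t] have the same colour for
   every [t] in [T_c]" then has probability [2 ^ -|T_c|].  Weighting it by
   [2 ^ -(|B(1000 k)| / 12)], the events touching a finite set [P] have total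
   weight at most [|P| / 32], because [|B(1001 k)| |B(k)| <= |B(1000 k)| ^ 2] and
   [|B(1000 k)| > 1000 k] in an infinite group.  Hence the asymmetric local
   lemma (counting on finitely many bits, then compactness) gives a colouring
   avoiding all bad events; for [d(g, h) = k], the pair [(g, g^-1 h)] yields a
   [t] with [|t| <= 1000 k] separating [g t] and [h t]. *)

(** * Counting assignments of bits *)

Definition set_bit (b : nat -> bool) (n : nat) (c : bool) : nat -> bool :=
  fun i => if Nat.eqb i n then c else b i.

(* [card_sat N P] is the number of assignments of the bits [0 .. N-1] satisfying
   [P], the bits from [N] on being read as [false]. *)
Fixpoint card_sat (N : nat) (P : (nat -> bool) -> bool) : nat :=
  match N with
  | 0 => if P (fun _ => false) then 1 else 0
  | S n => card_sat n (fun b => P (set_bit b n false))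
           + card_sat n (fun b => P (set_bit b n true))
  end.

Lemma card_sat_ext N : forall P Q, (forall b, P b = Q b) -> card_sat N P = card_sat N Q.
Proof.
  induction N as [|n IH]; intros P Q HPQ; simpl.
  - now rewrite HPQ.
  - f_equal; apply IH; intros; apply HPQ.
Qed.

Lemma card_sat_true N : forall P, (forall b, P b = true) -> card_sat N P = 2 ^ N.
Proof.
  induction N as [|n IH]; intros P HP; simpl.
  - now rewrite HP.
  - rewrite !IH by auto; lia.
Qed.

Lemma card_sat_false N : forall P, (forall b, P b = false) -> card_sat N P = 0.
Proof.
  induction N as [|n IH]; intros P HP; simpl.
  - now rewrite HP.
  - rewrite !IH by auto; lia.
Qed.

Lemma card_sat_split N : forall P Q,
  card_sat N P = card_sat N (fun b => P b && Q b) + card_sat N (fun b => P b && negb (Q b)).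
Proof.
  induction N as [|n IH]; intros P Q; simpl.
  - destruct (P _), (Q _); auto.
  - rewrite (IH (fun b => P (set_bit b n false)) (fun b => Q (set_bit b n false))),
      (IH (fun b => P (set_bit b n true)) (fun b => Q (set_bit b n true))); lia.
Qed.

Lemma card_sat_mono N : forall P Q : (nat -> bool) -> bool,
  (forall b, P b = true -> Q b = true) -> card_sat N P <= card_sat N Q.
Proof.
  induction N as [|n IH]; intros P Q HPQ; simpl.
  - destruct (P (fun _ => false)) eqn:HP; [rewrite (HPQ _ HP)|];
      destruct (Q (fun _ => false)); lia.
  - apply Nat.add_le_mono; apply IH; intros b; apply HPQ.
Qed.

Lemma card_sat_pos N : forall P, 0 < card_sat N P -> exists b, P b = true.
Proof.
  induction N as [|n IH]; intros P HP; simpl in HP.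
  - destruct (P _) eqn:E; [eauto | lia].
  - destruct (Nat.eq_dec (card_sat n (fun b => P (set_bit b n false))) 0).
    + destruct (IH (fun b => P (set_bit b n true))) as [b Hb]; [lia | eauto].
    + destruct (IH (fun b => P (set_bit b n false))) as [b Hb]; [lia | eauto].
Qed.

Definition depends_on (V : list nat) (P : (nat -> bool) -> bool) : Prop :=
  forall b b', (forall i, In i V -> b i = b' i) -> P b = P b'.

Lemma depends_on_set_bit V P n c :
  depends_on V P -> depends_on V (fun b => P (set_bit b n c)).
Proof.
  intros HP b b' Hbb'; apply HP; intros i Hi; unfold set_bit.
  destruct (Nat.eqb i n); auto.
Qed.

Lemma set_bit_irrelevant V P n c b :
  depends_on V P -> ~ In n V -> P (set_bit b n c) = P b.
Proof.
  intros HP Hn; apply HP; intros i Hi; unfold set_bit.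
  destruct (Nat.eqb_spec i n); congruence.
Qed.

Lemma card_sat_succ_irrelevant V P n :
  depends_on V P -> ~ In n V -> card_sat (S n) P = 2 * card_sat n P.
Proof.
  intros HP Hn; simpl.
  rewrite !(card_sat_ext n (fun b => P (set_bit b n _)) P)
    by (intros; apply (set_bit_irrelevant V); auto); lia.
Qed.

Lemma card_sat_indep N : forall VA VB A B,
  depends_on VA A -> depends_on VB B -> (forall i, In i VA -> ~ In i VB) ->
  card_sat N (fun b => A b && B b) * 2 ^ N = card_sat N A * card_sat N B.
Proof.
  induction N as [|n IH]; intros VA VB A B HA HB Hdisj; simpl.
  - destruct (A _), (B _); simpl; lia.
  - destruct (in_dec Nat.eq_dec n VA) as [HnA|HnA].
    + assert (HnB : ~ In n VB) by auto.
      rewrite !(card_sat_ext n (fun b => B (set_bit b n _)) B)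
        by (intros; apply (set_bit_irrelevant VB); auto).
      assert (HAB : forall c, card_sat n (fun b => A (set_bit b n c) && B (set_bit b n c))
                              = card_sat n (fun b => A (set_bit b n c) && B b))
        by (intros; apply card_sat_ext; intros; rewrite (set_bit_irrelevant VB B); auto).
      rewrite !HAB.
      pose proof (IH VA VB _ B (depends_on_set_bit VA A n false HA) HB Hdisj).
      pose proof (IH VA VB _ B (depends_on_set_bit VA A n true HA) HB Hdisj).
      nia.
    + rewrite !(card_sat_ext n (fun b => A (set_bit b n _)) A)
        by (intros; apply (set_bit_irrelevant VA); auto).
      assert (HAB : forall c, card_sat n (fun b => A (set_bit b n c) && B (set_bit b n c))
                              = card_sat n (fun b => A b && B (set_bit b n c)))
        by (intros; apply card_sat_ext; intros; rewrite (set_bit_irrelevant VA A); auto).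
      rewrite !HAB.
      pose proof (IH VA VB A _ HA (depends_on_set_bit VB B n false HB) Hdisj).
      pose proof (IH VA VB A _ HA (depends_on_set_bit VB B n true HB) Hdisj).
      nia.
Qed.

Lemma card_sat_pad V P n d :
  depends_on V P -> (forall i, In i V -> i < n) -> card_sat (d + n) P = 2 ^ d * card_sat n P.
Proof.
  intros HP HV; induction d as [|d IH]; [simpl; lia|].
  rewrite Nat.add_succ_l, (card_sat_succ_irrelevant V), IH
    by (auto; intros Hi; specialize (HV _ Hi); lia).
  simpl; lia.
Qed.

Definition eqb_bits (i j : nat) (b : nat -> bool) : bool := Bool.eqb (b i) (b j).

Lemma eqb_bits_sym i j b : eqb_bits i j b = eqb_bits j i b.
Proof. unfold eqb_bits; destruct (b i), (b j); auto. Qed.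

Lemma depends_on_eqb_bits i j : depends_on [i; j] (eqb_bits i j).
Proof. intros b b' H; unfold eqb_bits; rewrite (H i), (H j); simpl; auto. Qed.

Lemma card_sat_eqb_bits_lt i j N : i < j -> j < N -> card_sat N (eqb_bits i j) * 2 = 2 ^ N.
Proof.
  intros Hij HjN.
  assert (Htop : card_sat (S j) (eqb_bits i j) = 2 ^ j).
  { assert (Hbit : forall c b, eqb_bits i j (set_bit b j c) = Bool.eqb (b i) c).
    { intros c b; unfold eqb_bits, set_bit.
      now rewrite (proj2 (Nat.eqb_neq i j)), Nat.eqb_refl by lia. }
    simpl.
    rewrite (card_sat_ext j (fun b => eqb_bits i j (set_bit b j false)) (fun b => negb (b i))),
      (card_sat_ext j (fun b => eqb_bits i j (set_bit b j true)) (fun b => b i))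
      by (intros b; rewrite Hbit; destruct (b i); auto).
    rewrite <- (card_sat_true j (fun _ => true)), (card_sat_split j (fun _ => true) (fun b => b i))
      by auto.
    simpl; lia. }
  replace N with ((N - S j) + S j) by lia.
  rewrite (card_sat_pad [i; j]), Htop.
  - rewrite Nat.pow_add_r, Nat.pow_succ_r'; lia.
  - apply depends_on_eqb_bits.
  - simpl; intros k [<-|[<-|[]]]; lia.
Qed.

Lemma card_sat_eqb_bits i j N : i <> j -> i < N -> j < N -> card_sat N (eqb_bits i j) * 2 = 2 ^ N.
Proof.
  intros Hij Hi Hj; destruct (Nat.lt_ge_cases i j).
  - now apply card_sat_eqb_bits_lt.
  - rewrite (card_sat_ext N _ (eqb_bits j i)) by apply eqb_bits_sym.
    apply card_sat_eqb_bits_lt; lia.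
Qed.

Definition all_eqb_bits (ps : list (nat * nat)) (b : nat -> bool) : bool :=
  forallb (fun p => eqb_bits (fst p) (snd p) b) ps.

Definition pairs_support (ps : list (nat * nat)) : list nat :=
  flat_map (fun p => [fst p; snd p]) ps.

Lemma depends_on_all_eqb_bits ps : depends_on (pairs_support ps) (all_eqb_bits ps).
Proof.
  induction ps as [|[i j] ps IH]; intros b b' H; simpl; auto.
  unfold eqb_bits; simpl in H; rewrite (H i), (H j), (IH b b'); simpl; auto.
Qed.

Lemma card_sat_all_eqb_bits ps N :
  NoDup (pairs_support ps) -> (forall i, In i (pairs_support ps) -> i < N) ->
  card_sat N (all_eqb_bits ps) * 2 ^ length ps = 2 ^ N.
Proof.
  induction ps as [|[i j] ps IH]; intros Hnd HN.
  - rewrite (card_sat_true N) by auto; simpl; lia.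
  - simpl in Hnd, HN; apply NoDup_cons_iff in Hnd as [Hi Hnd].
    apply NoDup_cons_iff in Hnd as [Hj Hnd].
    assert (Hpair : card_sat N (eqb_bits i j) * 2 = 2 ^ N).
    { apply card_sat_eqb_bits; auto; intros ->; simpl in Hi; tauto. }
    assert (Hrest := IH Hnd (fun k Hk => HN k (or_intror (or_intror Hk)))).
    assert (Hprod := card_sat_indep N [i; j] (pairs_support ps) _ _
      (depends_on_eqb_bits i j) (depends_on_all_eqb_bits ps)
      ltac:(simpl; intros k [<-|[<-|[]]]; [intro; apply Hi; simpl; auto | exact Hj])).
    change (all_eqb_bits ((i, j) :: ps)) with (fun b => eqb_bits i j b && all_eqb_bits ps b).
    simpl length; rewrite Nat.pow_succ_r'.
    assert (0 < 2 ^ N) by (apply Nat.neq_0_lt_0, Nat.pow_nonzero; lia).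
    nia.
Qed.

(** * The local lemma *)

Lemma le_list_max i l : In i l -> i <= list_max l.
Proof.
  intros Hi; exact (proj1 (Forall_forall _ l) (proj1 (list_max_le l _) (le_n _)) i Hi).
Qed.

Definition prodR (l : list R) : R := fold_right Rmult 1%R l.
Definition sumR (l : list R) : R := fold_right Rplus 0%R l.

Lemma INR_pow2 N : INR (2 ^ N) = (2 ^ N)%R.
Proof. now rewrite pow_INR. Qed.

Section LocalLemma.
Variable bad : nat -> (nat -> bool) -> bool.
Variable support : nat -> list nat.
Variables x p : nat -> R.
Hypothesis bad_support : forall n, depends_on (support n) (bad n).
Hypothesis x_range : forall n, (0 <= x n < 1)%R.
Hypothesis bad_card : forall n N, (forall i, In i (support n) -> i < N) ->
  (INR (card_sat N (bad n)) <= p n * 2 ^ N)%R.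
Hypothesis local_condition : forall n L, NoDup L ->
  (forall f, In f L -> f <> n /\ exists i, In i (support n) /\ In i (support f)) ->
  (p n <= x n * prodR (map (fun f => 1 - x f) L))%R.

Definition avoids (T : list nat) (b : nat -> bool) : bool := forallb (fun f => negb (bad f b)) T.

Definition supported_below (N : nat) (T : list nat) : Prop :=
  forall f i, In f T -> In i (support f) -> i < N.

Definition overlapsb (e f : nat) : bool :=
  existsb (fun i => if in_dec Nat.eq_dec i (support f) then true else false) (support e).

Lemma overlapsb_spec e f : overlapsb e f = true <-> exists i, In i (support e) /\ In i (support f).
Proof.
  unfold overlapsb; rewrite existsb_exists.
  split; intros [i [Hie Hif]]; exists i; destruct (in_dec _ _ _); auto; discriminate.
Qed.

Lemma avoids_spec T b : avoids T b = true <-> forall f, In f T -> bad f b = false.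
Proof.
  unfold avoids; rewrite forallb_forall.
  split; intros H f Hf; specialize (H f Hf); destruct (bad f b); auto; discriminate.
Qed.

Lemma avoids_incl T T' b : incl T' T -> avoids T b = true -> avoids T' b = true.
Proof. rewrite !avoids_spec; auto. Qed.

Lemma depends_on_avoids T : depends_on (flat_map support T) (avoids T).
Proof.
  induction T as [|f T IH]; intros b b' Hbb'; simpl; auto.
  rewrite (bad_support f b b'), (IH b b'); auto;
    intros i Hi; apply Hbb', in_or_app; auto.
Qed.

Lemma supported_below_incl N T T' : supported_below N T -> incl T' T -> supported_below N T'.
Proof. intros HT Hincl f i Hf; apply HT, Hincl, Hf. Qed.

Lemma prod_compl_nonneg L : (0 <= prodR (map (fun f => 1 - x f) L))%R.
Proof.
  induction L as [|f L IH]; simpl; [lra|].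
  destruct (x_range f); apply Rmult_le_pos; lra.
Qed.

Lemma prod_compl_pos L : (0 < prodR (map (fun f => 1 - x f) L))%R.
Proof.
  induction L as [|f L IH]; simpl; [lra|].
  destruct (x_range f); apply Rmult_lt_0_compat; lra.
Qed.

Lemma card_avoids_cons N F L :
  INR (card_sat N (avoids (F :: L)))
  = (INR (card_sat N (avoids L)) - INR (card_sat N (fun b => bad F b && avoids L b)))%R.
Proof.
  rewrite (card_sat_split N (avoids L) (bad F)), plus_INR.
  rewrite (card_sat_ext N (avoids (F :: L)) (fun b => avoids L b && negb (bad F b)))
    by (intros; apply andb_comm).
  rewrite (card_sat_ext N (fun b => avoids L b && bad F b) (fun b => bad F b && avoids L b))
    by (intros; apply andb_comm).
  ring.
Qed.

Definition conditionally_bounded (N e : nat) (T : list nat) : Prop :=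
  (INR (card_sat N (fun b => bad e b && avoids T b)) <= x e * INR (card_sat N (avoids T)))%R.

Lemma avoids_same T T' b : (forall f, In f T <-> In f T') -> avoids T b = avoids T' b.
Proof. intros HTT'; apply eq_true_iff_eq; split; apply avoids_incl; intros f; apply HTT'. Qed.

Lemma conditionally_bounded_same N e T T' :
  (forall f, In f T <-> In f T') -> conditionally_bounded N e T -> conditionally_bounded N e T'.
Proof.
  intros HTT'; unfold conditionally_bounded.
  rewrite (card_sat_ext N (avoids T) (avoids T')), (card_sat_ext N (fun b => bad e b && avoids T b)
    (fun b => bad e b && avoids T' b)); auto; intros b; now rewrite (avoids_same T T').
Qed.

Lemma card_avoids_app N T2 : forall L,
  (forall pre F L', pre ++ F :: L' = L -> conditionally_bounded N F (L' ++ T2)) ->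
  (prodR (map (fun f => 1 - x f) L) * INR (card_sat N (avoids T2))
   <= INR (card_sat N (avoids (L ++ T2))))%R.
Proof.
  induction L as [|F L IH]; intros Hstep; simpl; [lra|].
  rewrite card_avoids_cons.
  assert (HF := Hstep [] F L eq_refl); unfold conditionally_bounded in HF.
  assert (HL : (prodR (map (fun f => 1 - x f) L) * INR (card_sat N (avoids T2))
                <= INR (card_sat N (avoids (L ++ T2))))%R).
  { apply IH; intros pre F' L' E; apply (Hstep (F :: pre)); simpl; now rewrite E. }
  destruct (x_range F).
  apply Rmult_le_compat_l with (r := (1 - x F)%R) in HL; lra.
Qed.

(* One step of the local lemma: [T1] collects the events overlapping [e], so
   that [e] is independent of the rest [T2]. *)
Lemma conditionally_bounded_split N e T1 T2 :
  (forall i, In i (support e) -> i < N) -> NoDup T1 -> ~ In e T1 ->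
  (forall f, In f T1 -> exists i, In i (support e) /\ In i (support f)) ->
  (forall f, In f T2 -> overlapsb e f = false) ->
  (prodR (map (fun f => 1 - x f) T1) * INR (card_sat N (avoids T2))
   <= INR (card_sat N (avoids (T1 ++ T2))))%R ->
  conditionally_bounded N e (T1 ++ T2).
Proof.
  intros HN Hnd HeT1 HT1 HT2 Hchain.
  assert (Hdrop : card_sat N (fun b => bad e b && avoids (T1 ++ T2) b)
                  <= card_sat N (fun b => bad e b && avoids T2 b)).
  { apply card_sat_mono; intros b; rewrite !andb_true_iff; intros [He Ha]; split; auto.
    apply (avoids_incl (T1 ++ T2)); auto; intros f Hf; apply in_or_app; auto. }
  assert (Hindep : card_sat N (fun b => bad e b && avoids T2 b) * 2 ^ N
                   = card_sat N (bad e) * card_sat N (avoids T2)).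
  { apply (card_sat_indep N (support e) (flat_map support T2)); auto using depends_on_avoids.
    intros i Hi Hi2; apply in_flat_map in Hi2 as [f [Hf Hif]].
    assert (Hov : overlapsb e f = true) by (apply overlapsb_spec; eauto).
    rewrite HT2 in Hov; auto; discriminate. }
  assert (Hcond : (p e <= x e * prodR (map (fun f => 1 - x f) T1))%R).
  { apply local_condition; auto; intros f Hf; split; [intros ->; contradiction | auto]. }
  assert (Hbad := bad_card e N HN).
  destruct (x_range e) as [Hx0 _].
  assert (H2N : (0 < 2 ^ N)%R) by (apply pow_lt; lra).
  assert (HD := pos_INR (card_sat N (avoids T2))).
  assert (HP := prod_compl_nonneg T1).
  apply le_INR in Hdrop.
  apply (f_equal INR) in Hindep; rewrite !mult_INR, INR_pow2 in Hindep.
  unfold conditionally_bounded; apply Rmult_le_reg_r with (2 ^ N)%R; auto.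
  apply Rmult_le_compat_r with (r := INR (card_sat N (avoids T2))) in Hbad; auto.
  apply Rmult_le_compat_l with (r := (x e * 2 ^ N)%R) in Hchain; [|apply Rmult_le_pos; lra].
  apply Rmult_le_compat_r with (r := (2 ^ N * INR (card_sat N (avoids T2)))%R) in Hcond;
    [|apply Rmult_le_pos; lra].
  apply Rmult_le_compat_r with (r := (2 ^ N)%R) in Hdrop; lra.
Qed.

Lemma conditionally_bounded_supported N : forall T e,
  supported_below N (e :: T) -> conditionally_bounded N e T.
Proof.
  intros T; induction T as [T IH] using (induction_ltof1 _ (@length nat)); intros e HN.
  destruct (in_dec Nat.eq_dec e T) as [HeT|HeT].
  { unfold conditionally_bounded; rewrite card_sat_false.
    - destruct (x_range e); simpl; apply Rmult_le_pos; auto using pos_INR.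
    - intros b; destruct (bad e b) eqn:Hb; auto.
      destruct (avoids T b) eqn:Ha; auto; rewrite avoids_spec in Ha; rewrite Ha in Hb; auto. }
  set (T1 := nodup Nat.eq_dec (filter (overlapsb e) T)).
  set (T2 := filter (fun f => negb (overlapsb e f)) T).
  assert (HT1 : forall f, In f T1 <-> In f T /\ overlapsb e f = true)
    by (intros f; unfold T1; rewrite nodup_In; apply filter_In).
  assert (HT2 : forall f, In f T2 <-> In f T /\ overlapsb e f = false)
    by (intros f; unfold T2; rewrite filter_In, negb_true_iff; tauto).
  apply (conditionally_bounded_same N e (T1 ++ T2)).
  { intros f; rewrite in_app_iff, HT1, HT2; destruct (overlapsb e f); intuition discriminate. }
  apply conditionally_bounded_split.
  - intros i Hi; apply (HN e); simpl; auto.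
  - apply NoDup_nodup.
  - rewrite HT1; tauto.
  - intros f Hf; apply overlapsb_spec, HT1, Hf.
  - intros f Hf; apply HT2, Hf.
  - apply card_avoids_app; intros pre F L' E; apply IH.
    + assert (length T1 <= length (filter (overlapsb e) T))
        by (apply NoDup_incl_length; [apply NoDup_nodup | intros f; apply nodup_In]).
      assert (length T1 = length pre + S (length L'))
        by (rewrite <- E, length_app; reflexivity).
      pose proof (filter_length (overlapsb e) T).
      unfold ltof, T2; rewrite length_app; lia.
    + apply (supported_below_incl N (e :: T)); auto.
      intros f Hf; right.
      assert (Hf' : In f T1 \/ In f T2).
      { rewrite <- E; destruct Hf as [<-|Hf]; [left; apply in_or_app; simpl; auto|].
        apply in_app_or in Hf as [Hf|Hf]; [left; apply in_or_app; simpl|]; auto. }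
      rewrite HT1, HT2 in Hf'; tauto.
Qed.

Lemma card_avoids_ge N T : supported_below N T ->
  (prodR (map (fun f => 1 - x f) T) * 2 ^ N <= INR (card_sat N (avoids T)))%R.
Proof.
  intros HN.
  rewrite <- (app_nil_r T) at 2; rewrite <- INR_pow2, <- (card_sat_true N (avoids [])) by auto.
  apply card_avoids_app; intros pre F L' E.
  apply conditionally_bounded_supported, (supported_below_incl N T); auto.
  intros f Hf; rewrite <- E; apply in_or_app; right; rewrite app_nil_r in Hf; exact Hf.
Qed.

Lemma avoids_satisfiable T : exists b, avoids T b = true.
Proof.
  set (N := S (list_max (flat_map support T))).
  assert (HN : supported_below N T)
    by (intros f i Hf Hi; apply le_n_S, le_list_max, in_flat_map; eauto).
  apply (card_sat_pos N), INR_lt.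
  assert (H := card_avoids_ge N T HN).
  assert (0 < prodR (map (fun f => 1 - x f) T) * 2 ^ N)%R
    by (apply Rmult_lt_0_compat; [apply prod_compl_pos | apply pow_lt; lra]).
  change (INR 0) with 0%R; lra.
Qed.
End LocalLemma.

Section Compactness.
Variable bad : nat -> (nat -> bool) -> bool.
Variable support : nat -> list nat.
Hypothesis bad_support : forall n, depends_on (support n) (bad n).
Hypothesis finitely_avoidable : forall n, exists b, forall k, k <= n -> bad k b = false.

Definition extendable (pf : list bool) : Prop :=
  forall n, exists b, (forall i, i < length pf -> b i = nth i pf false) /\
                      forall k, k <= n -> bad k b = false.

Lemma extendable_nil : extendable [].
Proof.
  intros n; destruct (finitely_avoidable n) as [b Hb].
  exists b; split; auto; simpl; intros; lia.
Qed.

Lemma extendable_snoc pf : extendable pf -> extendable (pf ++ [false]) \/ extendable (pf ++ [true]).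
Proof.
  intros Hpf; apply NNPP; intros Hnot; apply not_or_and in Hnot as [H0 H1].
  apply not_all_ex_not in H0 as [n0 H0]; apply not_all_ex_not in H1 as [n1 H1].
  destruct (Hpf (Nat.max n0 n1)) as [b [Hpre Hbad]].
  assert (Hext : forall i, i < length (pf ++ [b (length pf)]) ->
                           b i = nth i (pf ++ [b (length pf)]) false).
  { intros i Hi; rewrite length_app in Hi; simpl in Hi.
    destruct (Nat.lt_ge_cases i (length pf)).
    - rewrite app_nth1; auto.
    - replace i with (length pf) by lia; rewrite app_nth2, Nat.sub_diag; auto. }
  destruct (b (length pf)); [apply H1|apply H0]; exists b; split; auto; intros; apply Hbad; lia.
Qed.

Definition next_bit (pf : list bool) : bool :=
  if excluded_middle_informative (extendable (pf ++ [false])) then false else true.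

Fixpoint prefix (n : nat) : list bool :=
  match n with 0 => [] | S n => prefix n ++ [next_bit (prefix n)] end.

Lemma prefix_extendable n : extendable (prefix n).
Proof.
  induction n as [|n IH]; simpl; [apply extendable_nil|]; unfold next_bit.
  destruct (excluded_middle_informative _); auto.
  destruct (extendable_snoc _ IH); tauto.
Qed.

Lemma length_prefix n : length (prefix n) = n.
Proof. induction n; simpl; auto; rewrite length_app; simpl; lia. Qed.

Lemma nth_prefix i n m : i < n -> n <= m -> nth i (prefix n) false = nth i (prefix m) false.
Proof.
  intros Hi Hm; induction Hm as [|m Hm IH]; auto.
  rewrite IH; simpl; rewrite app_nth1; auto; rewrite length_prefix; lia.
Qed.

Lemma compactness : exists b, forall n, bad n b = false.
Proof.
  exists (fun i => nth i (prefix (S i)) false); intros n.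
  set (M := S (list_max (support n))).
  destruct (prefix_extendable M n) as [b [Hpre Hbad]].
  rewrite (bad_support n _ b); [apply Hbad; auto|].
  intros i Hi; assert (HiM : i < M) by apply le_n_S, le_list_max, Hi.
  rewrite Hpre by (rewrite length_prefix; auto).
  destruct (Nat.le_gt_cases M (S i)).
  - symmetry; apply nth_prefix; auto.
  - apply nth_prefix; lia.
Qed.
End Compactness.

(* The asymmetric Lovász local lemma, for countably many events on fair bits. *)
Theorem local_lemma (bad : nat -> (nat -> bool) -> bool) (support : nat -> list nat)
  (x p : nat -> R) :
  (forall n, depends_on (support n) (bad n)) ->
  (forall n, (0 <= x n < 1)%R) ->
  (forall n N, (forall i, In i (support n) -> i < N) ->
     (INR (card_sat N (bad n)) <= p n * 2 ^ N)%R) ->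
  (forall n L, NoDup L ->
     (forall f, In f L -> f <> n /\ exists i, In i (support n) /\ In i (support f)) ->
     (p n <= x n * prodR (map (fun f => 1 - x f) L))%R) ->
  exists b, forall n, bad n b = false.
Proof.
  intros Hsupp Hx Hp Hcond; apply (compactness bad support Hsupp).
  intros n; destruct (avoids_satisfiable bad support x p Hsupp Hx Hp Hcond (seq 0 (S n)))
    as [b Hb].
  exists b; intros k Hk; rewrite avoids_spec in Hb; apply Hb, in_seq; lia.
Qed.

Local Open Scope R_scope.

Lemma exp_neg_double_le y : 0 <= y <= 1/2 -> exp (-2 * y) <= 1 - y.
Proof.
  intros Hy.
  assert (H1 := exp_ineq1_le (2 * y)).
  assert (Hpos := exp_pos (2 * y)).
  replace (-2 * y) with (- (2 * y)) by ring; rewrite exp_Ropp.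
  apply Rmult_le_reg_r with (exp (2 * y)); auto.
  rewrite Rinv_l by lra.
  apply Rmult_le_compat_l with (r := 1 - y) in H1; nra.
Qed.

Lemma prod_compl_ge_exp {A : Type} (x : A -> R) L : (forall f, In f L -> 0 <= x f <= 1/2) ->
  exp (-2 * sumR (map x L)) <= prodR (map (fun f => 1 - x f) L).
Proof.
  induction L as [|a L IH]; intros Hx; simpl.
  - rewrite Rmult_0_r, exp_0; lra.
  - rewrite Rmult_plus_distr_l, exp_plus.
    apply Rmult_le_compat; try (left; apply exp_pos).
    + apply exp_neg_double_le, Hx; simpl; auto.
    + apply IH; intros f Hf; apply Hx; simpl; auto.
Qed.

Lemma Rinv_pow2_pos n : 0 < / 2 ^ n.
Proof. apply Rinv_0_lt_compat, pow_lt; lra. Qed.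

Lemma Rinv_pow2_le m n : (m <= n)%nat -> / 2 ^ n <= / 2 ^ m.
Proof.
  intros Hmn; apply Rinv_le_contravar; [apply pow_lt; lra | apply Rle_pow; [lra | exact Hmn]].
Qed.

Lemma Rinv_pow2_le_exp n : / 2 ^ n <= exp (- INR n / 2).
Proof.
  (* since [exp 1 <= 3 < 4] *)
  assert (Hhalf : exp (1/2) <= 2).
  { assert (He : exp 1 = exp (1/2) * exp (1/2)) by (rewrite <- exp_plus; f_equal; lra).
    assert (H3 := exp_le_3); assert (0 < exp (1/2)) by apply exp_pos; nra. }
  replace (- INR n / 2) with (- (INR n * (1/2))) by lra.
  rewrite exp_Ropp; apply Rinv_le_contravar; [apply exp_pos|].
  induction n as [|n IH]; [simpl; rewrite Rmult_0_l, exp_0; lra|].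
  rewrite S_INR, Rmult_plus_distr_r, Rmult_1_l, exp_plus, Rmult_comm.
  change (2 ^ S n) with (2 * 2 ^ n).
  apply Rmult_le_compat; auto; left; apply exp_pos.
Qed.

Lemma exp_le_compat a b : a <= b -> exp a <= exp b.
Proof. intros [Hab | ->]; [left; apply exp_increasing, Hab | apply Rle_refl]. Qed.

Lemma Rinv_pow2_le_split m : / 2 ^ m <= / 2 ^ (m / 4) * exp (- INR m / 8).
Proof.
  assert (Hq : (4 * (m / 4) <= m)%nat) by apply Nat.Div0.mul_div_le.
  replace m with (m / 4 + (m - m / 4))%nat at 1 by lia.
  rewrite pow_add, Rinv_mult; apply Rmult_le_compat_l; [left; apply Rinv_pow2_pos|].
  eapply Rle_trans; [apply Rinv_pow2_le_exp | apply exp_le_compat].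
  rewrite minus_INR by lia; apply le_INR in Hq; rewrite mult_INR in Hq.
  replace (INR 4) with 4 in Hq by (simpl; lra); pose proof (pos_INR m); lra.
Qed.

Lemma Rinv_pow2_mul_le a s t : (a * 2 ^ s <= 2 ^ t)%nat -> INR a * / 2 ^ t <= / 2 ^ s.
Proof.
  intros H; apply le_INR in H; rewrite mult_INR, !INR_pow2 in H.
  assert (0 < 2 ^ s) by (apply pow_lt; lra); assert (0 < 2 ^ t) by (apply pow_lt; lra).
  apply Rmult_le_reg_r with (2 ^ s * 2 ^ t); [nra|].
  replace (INR a * / 2 ^ t * (2 ^ s * 2 ^ t)) with (INR a * 2 ^ s) by (field; lra).
  replace (/ 2 ^ s * (2 ^ s * 2 ^ t)) with (2 ^ t) by (field; lra); exact H.
Qed.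

Lemma sum_Rinv_pow2_shift K : sumR (map (fun k => / 2 ^ (k + 5)) (seq 1 K)) <= / 32.
Proof.
  assert (Hgeom : forall s, sumR (map (fun k => / 2 ^ (k + 5)) (seq s K)) <= 2 * / 2 ^ (s + 5)).
  { induction K as [|K IH]; intros s; simpl.
    - assert (H := Rinv_pow2_pos (s + 5)); lra.
    - specialize (IH (S s)); simpl in IH; rewrite Rinv_mult in IH; lra. }
  specialize (Hgeom 1%nat); simpl in Hgeom; lra.
Qed.

Lemma sumR_app l1 l2 : sumR (l1 ++ l2) = sumR l1 + sumR l2.
Proof. induction l1 as [|a l1 IH]; simpl; [ring | rewrite IH; ring]. Qed.

Lemma sumR_flat_map {A B : Type} (w : B -> R) (F : A -> list B) l :
  sumR (map w (flat_map F l)) = sumR (map (fun a => sumR (map w (F a))) l).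
Proof. induction l as [|a l IH]; simpl; auto; rewrite map_app, sumR_app, IH; auto. Qed.

Lemma sumR_const {A : Type} (c : R) (l : list A) : sumR (map (fun _ => c) l) = INR (length l) * c.
Proof.
  induction l as [|a l IH]; [simpl; ring|].
  simpl map; simpl length; rewrite S_INR; simpl; lra.
Qed.

Lemma sumR_le {A : Type} (f g : A -> R) l :
  (forall a, In a l -> f a <= g a) -> sumR (map f l) <= sumR (map g l).
Proof.
  induction l as [|a l IH]; intros Hfg; simpl; [lra|].
  apply Rplus_le_compat; [apply Hfg; simpl; auto | apply IH; intros; apply Hfg; simpl; auto].
Qed.

Lemma sumR_scal_l {A : Type} (c : R) (h : A -> R) l :
  sumR (map (fun a => c * h a) l) = c * sumR (map h l).
Proof. induction l as [|a l IH]; simpl; [ring | rewrite IH; ring]. Qed.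

Local Close Scope R_scope.

Definition classic_eq_dec {A : Type} (a b : A) : {a = b} + {a <> b} :=
  excluded_middle_informative (a = b).

Lemma sumR_remove {A : Type} (w : A -> R) a l : NoDup l -> In a l ->
  sumR (map w l) = (w a + sumR (map w (remove classic_eq_dec a l)))%R.
Proof.
  induction l as [|b l IH]; intros Hnd Ha; [destruct Ha|].
  apply NoDup_cons_iff in Hnd as [Hb Hnd]; simpl.
  destruct (classic_eq_dec a b) as [<-|Hab].
  - rewrite notin_remove; auto.
  - destruct Ha as [->|Ha]; [congruence|]; simpl; rewrite IH; auto; ring.
Qed.

Lemma sumR_incl {A : Type} (w : A -> R) : (forall a, 0 <= w a)%R ->
  forall M l, NoDup l -> incl l M -> (sumR (map w l) <= sumR (map w M))%R.
Proof.
  intros Hw M; induction M as [|a M IH]; intros l Hnd Hincl.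
  - destruct l as [|b l]; simpl; [lra|]; destruct (Hincl b); simpl; auto.
  - simpl; destruct (in_dec classic_eq_dec a l) as [Ha|Ha].
    + rewrite (sumR_remove w a l Hnd Ha); apply Rplus_le_compat_l, IH.
      * rewrite <- remove_alt; apply NoDup_filter, Hnd.
      * intros y Hy; apply in_remove in Hy as [Hy Hya].
        destruct (Hincl y Hy); [congruence | assumption].
    + assert (HlM : incl l M) by (intros y Hy; destruct (Hincl y Hy); subst; tauto).
      specialize (Hw a); specialize (IH l Hnd HlM); lra.
Qed.

(* [442368 = 24 ^ 3 * 32] *)
Lemma Z_cube_le_pow2 (z : Z) : (40 <= z)%Z -> (442368 * (z + 1) ^ 3 <= 2 ^ z)%Z.
Proof.
  intros Hz; pattern z; apply Z.le_ind with (n := 40%Z); auto.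
  - intros a b ->; tauto.
  - vm_compute; discriminate.
  - intros m Hm IH; rewrite Z.pow_succ_r by lia; unfold Z.succ.
    assert (Hcube : ((m + 1 + 1) ^ 3 <= 2 * (m + 1) ^ 3)%Z).
    { assert (E : forall a, ((a + 1) ^ 3 = a * a * a + 3 * a * a + 3 * a + 1)%Z) by (intros; ring).
      rewrite (E (m + 1)%Z), (E m); nia. }
    revert IH Hcube; generalize (2 ^ m)%Z ((m + 1) ^ 3)%Z ((m + 1 + 1) ^ 3)%Z; lia.
Qed.

(* With [z = b / 24 >= 40]: [b ^ 3 <= 24 ^ 3 (z + 1) ^ 3], [2 ^ (k + 5) <= 32 * 2 ^ z]
   and [2 z <= b / 12]. *)
Lemma cube_mul_pow2_le b k : 1 <= k -> 1000 * k <= b -> b ^ 3 * 2 ^ (k + 5) <= 2 ^ (b / 12).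
Proof.
  intros Hk Hb; apply Nat2Z.inj_le.
  rewrite Nat2Z.inj_mul, !Nat2Z.inj_pow, Nat2Z.inj_add, Nat2Z.inj_div.
  change (Z.of_nat 2) with 2%Z; change (Z.of_nat 3) with 3%Z.
  change (Z.of_nat 5) with 5%Z; change (Z.of_nat 12) with 12%Z.
  set (B := Z.of_nat b) in *; set (K := Z.of_nat k) in *.
  assert (HB : (1000 * K <= B)%Z) by lia.
  assert (H24 := Z.div_mod B 24 ltac:(lia)); assert (H24' := Z.mod_pos_bound B 24 ltac:(lia)).
  assert (H12 := Z.div_mod B 12 ltac:(lia)); assert (H12' := Z.mod_pos_bound B 12 ltac:(lia)).
  set (z := (B / 24)%Z) in *; set (y := (B / 12)%Z) in *.
  assert (Hcube : (B ^ 3 <= 24 ^ 3 * (z + 1) ^ 3)%Z)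
    by (rewrite <- Z.pow_mul_l; apply Z.pow_le_mono_l; lia).
  assert (Hpow : (2 ^ (K + 5) <= 32 * 2 ^ z)%Z).
  { rewrite Z.pow_add_r, Z.mul_comm by lia.
    apply Z.mul_le_mono_nonneg_l; [lia | apply Z.pow_le_mono_r; lia]. }
  assert (Hbase := Z_cube_le_pow2 z ltac:(lia)).
  assert (Hy : (2 ^ z * 2 ^ z <= 2 ^ y)%Z)
    by (rewrite <- Z.pow_add_r by lia; apply Z.pow_le_mono_r; lia).
  assert (0 <= B ^ 3)%Z by (apply Z.pow_nonneg; lia).
  assert (0 < 2 ^ z)%Z by (apply Z.pow_pos_nonneg; lia).
  assert (0 <= (z + 1) ^ 3)%Z by (apply Z.pow_nonneg; lia).
  assert (0 <= 2 ^ (K + 5))%Z by (apply Z.pow_nonneg; lia).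
  apply Z.le_trans with (24 ^ 3 * (z + 1) ^ 3 * (32 * 2 ^ z))%Z; [apply Z.mul_le_mono_nonneg; lia|].
  nia.
Qed.

(** * Words and distances *)

Section GroupFacts.
Context {G : Group}.
Local Notation "x ** y" := (gmul G x y) (at level 40, left associativity).

Lemma gmul_inv_cancel_l x y : ginv G x ** (x ** y) = y.
Proof. now rewrite gmul_assoc, gmul_Vl, gmul_1l. Qed.

Lemma gmul_cancel_inv_l x y : x ** (ginv G x ** y) = y.
Proof. now rewrite gmul_assoc, gmul_Vr, gmul_1l. Qed.

Lemma gmul_inv_cancel_r x y : x ** y ** ginv G y = x.
Proof. now rewrite <- gmul_assoc, gmul_Vr, gmul_1r. Qed.

Lemma gmul_reg_l x y z : x ** y = x ** z -> y = z.
Proof. intros H; now rewrite <- (gmul_inv_cancel_l x y), H, gmul_inv_cancel_l. Qed.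

Lemma gmul_reg_r x y z : y ** x = z ** x -> y = z.
Proof. intros H; now rewrite <- (gmul_inv_cancel_r y x), H, gmul_inv_cancel_r. Qed.

Lemma ginv_unique x y : x ** y = gone G -> y = ginv G x.
Proof. intros H; apply (gmul_reg_l x); now rewrite H, gmul_Vr. Qed.

Lemma ginv_mul x y : ginv G (x ** y) = ginv G y ** ginv G x.
Proof.
  symmetry; apply ginv_unique.
  now rewrite <- gmul_assoc, (gmul_assoc _ y), gmul_Vr, gmul_1l, gmul_Vr.
Qed.

Lemma wprod_app (u v : list G) : wprod (u ++ v) = wprod u ** wprod v.
Proof. induction u as [|s u IH]; simpl; [now rewrite gmul_1l | now rewrite IH, gmul_assoc]. Qed.

Lemma word_in_cons (S : list G) s w : word_in S (s :: w) <-> In s S /\ word_in S w.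
Proof.
  unfold word_in; simpl; split; [intros H; split; auto|].
  intros [Hs Hw] a [<-|Ha]; auto.
Qed.

Lemma word_in_app (S : list G) u v : word_in S (u ++ v) <-> word_in S u /\ word_in S v.
Proof.
  unfold word_in; split.
  - intros H; split; intros s Hs; apply H, in_or_app; auto.
  - intros [Hu Hv] s Hs; apply in_app_or in Hs as [Hs|Hs]; auto.
Qed.

Definition winv (w : list G) : list G := rev (map (ginv G) w).

Lemma wprod_winv w : wprod (winv w) = ginv G (wprod w).
Proof.
  induction w as [|s w IH]; simpl.
  - apply ginv_unique; now rewrite gmul_1l.
  - unfold winv in *; simpl; rewrite wprod_app, IH; simpl; now rewrite gmul_1r, ginv_mul.
Qed.

Lemma word_in_winv (S : list G) w : symmetric S -> word_in S w -> word_in S (winv w).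
Proof.
  intros Hsym Hw s Hs; unfold winv in Hs; rewrite <- in_rev in Hs.
  apply in_map_iff in Hs as [a [<- Ha]]; apply Hsym, Hw, Ha.
Qed.

Lemma length_winv w : length (winv w) = length w.
Proof. unfold winv; now rewrite length_rev, length_map. Qed.

Lemma dist_eq_exists (S : list G) g h w : word_in S w -> g ** wprod w = h ->
  exists n, n <= length w /\ dist_eq S g h n.
Proof.
  intros Hw Hgh.
  set (P := fun n => exists w, word_in S w /\ length w = n /\ g ** wprod w = h).
  destruct (dec_inh_nat_subset_has_unique_least_element P (fun n => classic (P n)))
    as [n [[Pn Hleast] _]]; [exists (length w), w; auto|].
  exists n; split; [apply Hleast; exists w; auto|].
  split; [exact Pn|]; intros w' Hw' Hgh'; apply Hleast; exists w'; auto.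
Qed.

Lemma dist_eq_unique (S : list G) g h k k' : dist_eq S g h k -> dist_eq S g h k' -> k = k'.
Proof.
  intros [[w [Hw [Hlen Hgh]]] Hmin] [[w' [Hw' [Hlen' Hgh']]] Hmin'].
  specialize (Hmin w' Hw' Hgh'); specialize (Hmin' w Hw Hgh); lia.
Qed.

Lemma dist_eq_translate (S : list G) g h k :
  dist_eq S g h k -> dist_eq S (gone G) (ginv G g ** h) k.
Proof.
  intros [[w [Hw [Hlen Hgh]]] Hmin]; split.
  - exists w; repeat split; auto; now rewrite gmul_1l, <- Hgh, gmul_inv_cancel_l.
  - intros w' Hw' Hgh'; apply Hmin; auto.
    rewrite gmul_1l in Hgh'; now rewrite Hgh', gmul_cancel_inv_l.
Qed.

Lemma length_remove_NoDup {A : Type} (a : A) l :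
  NoDup l -> length l <= S (length (remove classic_eq_dec a l)).
Proof.
  induction l as [|b l IH]; intros Hnd; simpl; [lia|].
  apply NoDup_cons_iff in Hnd as [Hb Hnd].
  destruct (classic_eq_dec a b) as [<-|Hab]; simpl.
  - rewrite notin_remove; auto.
  - specialize (IH Hnd); lia.
Qed.

(* Greedily keep an element [t] and discard [c t] and [c^-1 t]. *)
Lemma separated_sublist (c : G) : forall L, NoDup L -> exists T, NoDup T /\ incl T L /\
  length L <= 3 * length T /\ forall t t', In t T -> In t' T -> t <> t' -> t <> c ** t'.
Proof.
  intros L; induction L as [L IH] using (induction_ltof1 _ (@length G)); intros Hnd.
  destruct L as [|t L].
  { exists []; repeat split; [constructor | intros a [] | simpl; lia | intros t t' []]. }
  apply NoDup_cons_iff in Hnd as [Ht Hnd].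
  set (L1 := remove classic_eq_dec (ginv G c ** t) L).
  set (L2 := remove classic_eq_dec (c ** t) L1).
  assert (HL1 : NoDup L1) by (unfold L1; rewrite <- remove_alt; apply NoDup_filter, Hnd).
  assert (HL2 : NoDup L2) by (unfold L2; rewrite <- remove_alt; apply NoDup_filter, HL1).
  assert (Hlen : length L <= S (S (length L2)))
    by (pose proof (length_remove_NoDup (ginv G c ** t) L Hnd) as H1;
        pose proof (length_remove_NoDup (c ** t) L1 HL1) as H2; fold L1 in H1; fold L2 in H2; lia).
  assert (HinL2 : forall y, In y L2 -> In y L /\ y <> ginv G c ** t /\ y <> c ** t)
    by (intros y Hy; apply in_remove in Hy as [Hy Hy2]; apply in_remove in Hy as [Hy Hy1]; auto).
  destruct (IH L2) as [T [HT [Hincl [HTlen Hsep]]]]; auto.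
  { unfold ltof; simpl; pose proof (remove_length_le classic_eq_dec L (ginv G c ** t)) as H1;
    pose proof (remove_length_le classic_eq_dec L1 (c ** t)) as H2.
    fold L1 in H1; fold L2 in H2; lia. }
  exists (t :: T); repeat split.
  - constructor; auto; intros HtT; apply Ht, HinL2, Hincl, HtT.
  - intros y [<-|Hy]; [left; auto | right; apply HinL2, Hincl, Hy].
  - simpl; lia.
  - intros a b [<-|Ha] [<-|Hb] Hab; try tauto.
    + apply Hincl, HinL2 in Hb as [_ [Hb _]]; intros E; apply Hb; now rewrite E, gmul_inv_cancel_l.
    + apply Hincl, HinL2 in Ha as [_ [_ Ha]]; exact Ha.
    + apply Hsep; auto.
Qed.

Definition test_points (g c : G) (T : list G) : list G :=
  flat_map (fun t => [g ** t; g ** (c ** t)]) T.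

Lemma in_test_points g c T y :
  In y (test_points g c T) <-> exists t, In t T /\ (y = g ** t \/ y = g ** (c ** t)).
Proof.
  unfold test_points; rewrite in_flat_map; split.
  - intros [t [Ht [<-|[<-|[]]]]]; eauto.
  - intros [t [Ht [->| ->]]]; exists t; simpl; auto.
Qed.

Lemma length_test_points g c T : length (test_points g c T) = 2 * length T.
Proof. induction T as [|t T IH]; simpl; auto; rewrite IH; lia. Qed.

Lemma test_points_NoDup g c T : c <> gone G -> NoDup T ->
  (forall t t', In t T -> In t' T -> t <> t' -> t <> c ** t') -> NoDup (test_points g c T).
Proof.
  intros Hc; induction T as [|t T IH]; intros Hnd Hsep; simpl; [constructor|].
  apply NoDup_cons_iff in Hnd as [Ht Hnd].
  assert (HT := IH Hnd (fun a b Ha Hb => Hsep a b (or_intror Ha) (or_intror Hb))).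
  assert (Hne : forall t', In t' T -> t <> t') by (intros t' Ht' ->; contradiction).
  constructor; [|constructor]; auto.
  - intros [E|E].
    + apply gmul_reg_l in E; apply Hc, (gmul_reg_r t); now rewrite gmul_1l.
    + apply in_test_points in E as [t' [Ht' [E|E]]]; apply gmul_reg_l in E.
      * subst; contradiction.
      * exact (Hsep t t' (or_introl eq_refl) (or_intror Ht') (Hne t' Ht') E).
  - intros E; apply in_test_points in E as [t' [Ht' [E|E]]]; apply gmul_reg_l in E.
    + exact (Hsep t' t (or_intror Ht') (or_introl eq_refl) (fun E' => Hne t' Ht' (eq_sym E'))
               (eq_sym E)).
    + apply gmul_reg_l in E; subst; contradiction.
Qed.
End GroupFacts.

Section CayleyGraph.
Context {G : Group}.
Variable gens : list G.
Hypothesis gens_generates : generates gens.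
Hypothesis gens_symmetric : symmetric gens.
Hypothesis G_infinite : @infinite_group G.

Local Notation "x ** y" := (gmul G x y) (at level 40, left associativity).
Local Notation one := (gone G).

Fixpoint words_upto (n : nat) : list (list G) :=
  match n with
  | 0 => [[]]
  | S n => [] :: flat_map (fun s => map (cons s) (words_upto n)) gens
  end.

Lemma in_words_upto n w : In w (words_upto n) <-> word_in gens w /\ length w <= n.
Proof.
  revert w; induction n as [|n IH]; intros w; simpl.
  - split; [intros [<-|[]]; split; [intros s []|simpl; lia]|].
    intros [_ H]; destruct w; simpl in *; auto; lia.
  - rewrite in_flat_map; split.
    + intros [<-|[s [Hs Hw]]]; [split; [intros a []|simpl; lia]|].
      apply in_map_iff in Hw as [w' [<- Hw']]; apply IH in Hw' as [Hw' Hlen].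
      split; [apply word_in_cons; auto | simpl; lia].
    + intros [Hw Hlen]; destruct w as [|s w]; auto; right.
      apply word_in_cons in Hw as [Hs Hw]; exists s; split; auto.
      apply in_map, IH; simpl in Hlen; split; auto; lia.
Qed.

Definition ball (n : nat) : list G := nodup classic_eq_dec (map (@wprod G) (words_upto n)).

Definition ball_size (n : nat) : nat := length (ball n).

Lemma in_ball n x : In x (ball n) <-> exists w, word_in gens w /\ length w <= n /\ wprod w = x.
Proof.
  unfold ball; rewrite nodup_In, in_map_iff; split.
  - intros [w [<- Hw]]; apply in_words_upto in Hw as [Hw Hlen]; eauto.
  - intros [w [Hw [Hlen <-]]]; exists w; split; auto; apply in_words_upto; auto.
Qed.

Lemma ball_NoDup n : NoDup (ball n).
Proof. apply NoDup_nodup. Qed.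

Lemma one_in_ball n : In one (ball n).
Proof. apply in_ball; exists []; repeat split; simpl; [intros s []|lia]. Qed.

Lemma incl_ball r s : r <= s -> incl (ball r) (ball s).
Proof.
  intros Hrs x Hx; apply in_ball in Hx as [w [Hw [Hlen <-]]].
  apply in_ball; exists w; repeat split; auto; lia.
Qed.

Lemma ball_size_le r s : r <= s -> ball_size r <= ball_size s.
Proof. intros Hrs; apply NoDup_incl_length; [apply ball_NoDup | apply incl_ball, Hrs]. Qed.

Lemma ball_mul r s u v : In u (ball r) -> In v (ball s) -> In (u ** v) (ball (r + s)).
Proof.
  intros Hu Hv; apply in_ball in Hu as [w1 [Hw1 [Hlen1 <-]]].
  apply in_ball in Hv as [w2 [Hw2 [Hlen2 <-]]].
  apply in_ball; exists (w1 ++ w2); rewrite word_in_app, length_app, wprod_app.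
  repeat split; auto; lia.
Qed.

Lemma ball_split r s x : In x (ball (r + s)) ->
  exists u v, In u (ball r) /\ In v (ball s) /\ x = u ** v.
Proof.
  intros Hx; apply in_ball in Hx as [w [Hw [Hlen <-]]].
  rewrite <- (firstn_skipn r w) in Hw |- *; apply word_in_app in Hw as [Hw1 Hw2].
  exists (wprod (firstn r w)), (wprod (skipn r w)); rewrite wprod_app; repeat split; auto.
  - apply in_ball; exists (firstn r w); rewrite length_firstn; repeat split; auto; lia.
  - apply in_ball; exists (skipn r w); rewrite length_skipn; repeat split; auto; lia.
Qed.

Lemma ball_size_add r s : ball_size (r + s) <= ball_size r * ball_size s.
Proof.
  unfold ball_size; rewrite <- length_prod, <- (length_map (fun p => fst p ** snd p)).
  apply NoDup_incl_length; [apply ball_NoDup|].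
  intros x Hx; apply ball_split in Hx as [u [v [Hu [Hv ->]]]].
  apply in_map_iff; exists (u, v); split; auto; apply in_prod; auto.
Qed.

Lemma ball_stable_full n : incl (ball (S n)) (ball n) -> forall g : G, In g (ball n).
Proof.
  intros Hstable.
  assert (Hm : forall m, incl (ball m) (ball n)).
  { induction m as [|m IH]; [apply incl_ball; lia|].
    intros x Hx; apply in_ball in Hx as [[|s w] [Hw [Hlen <-]]]; [apply one_in_ball|].
    apply word_in_cons in Hw as [Hs Hw].
    assert (Hwn : In (wprod w) (ball n))
      by (apply IH, in_ball; exists w; simpl in Hlen; repeat split; auto; lia).
    apply in_ball in Hwn as [u [Hu [Hulen Hwu]]].
    apply Hstable, in_ball; exists (s :: u); simpl; rewrite Hwu.
    repeat split; auto; [apply word_in_cons; auto | lia]. }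
  intros g; destruct (gens_generates g) as [w [Hw <-]].
  apply (Hm (length w)), in_ball; exists w; auto.
Qed.

(* Every sphere of an infinite group is nonempty. *)
Lemma ball_size_gt n : n < ball_size n.
Proof.
  induction n as [|n IH].
  - unfold ball_size; assert (H := one_in_ball 0); destruct (ball 0); [destruct H | simpl; lia].
  - assert (Hnew : exists x, In x (ball (S n)) /\ ~ In x (ball n)).
    { apply NNPP; intros Hnone; apply G_infinite; exists (ball n); apply ball_stable_full.
      intros x Hx; apply NNPP; intros Hxn; apply Hnone; eauto. }
    destruct Hnew as [x [Hx Hxn]].
    assert (length (x :: ball n) <= ball_size (S n)).
    { apply NoDup_incl_length; [constructor; auto; apply ball_NoDup|].
      intros y [<-|Hy]; auto; apply (incl_ball n); auto. }
    unfold ball_size in *; simpl in *; lia.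
Qed.

Lemma dist_eq_one_exists c : exists k, dist_eq gens one c k.
Proof.
  destruct (gens_generates c) as [w [Hw Hc]].
  destruct (dist_eq_exists gens one c w Hw) as [k [_ Hk]]; [now rewrite gmul_1l|eauto].
Qed.

Definition word_length (c : G) : nat :=
  proj1_sig (constructive_indefinite_description _ (dist_eq_one_exists c)).

Lemma word_length_spec c : dist_eq gens one c (word_length c).
Proof. unfold word_length; destruct (constructive_indefinite_description _ _); auto. Qed.

Lemma word_length_pos c : c <> one -> 1 <= word_length c.
Proof.
  intros Hc; destruct (word_length_spec c) as [[w [Hw [Hlen Hwc]]] _].
  destruct w; simpl in *; [rewrite gmul_1r in Hwc; congruence | lia].
Qed.

Lemma word_length_one : word_length one = 0.
Proof.
  destruct (word_length_spec one) as [_ Hmin].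
  specialize (Hmin [] (fun s Hs => match Hs with end) (gmul_1r G one)); simpl in Hmin; lia.
Qed.

Lemma in_ball_word_length c : In c (ball (word_length c)).
Proof.
  destruct (word_length_spec c) as [[w [Hw [Hlen Hwc]]] _].
  apply in_ball; exists w; rewrite gmul_1l in Hwc; repeat split; auto; lia.
Qed.

Lemma in_ball_wlen_eq t r :
  In t (ball r) -> exists n, n <= r /\ wlen_eq gens t n.
Proof.
  intros Ht; apply in_ball in Ht as [u [Hu [Hlen <-]]].
  destruct (dist_eq_exists gens (wprod u) one (winv u)) as [n [Hn Hd]].
  - apply word_in_winv; auto.
  - now rewrite wprod_winv, gmul_Vr.
  - rewrite length_winv in Hn; exists n; split; [lia | exact Hd].
Qed.

(** * The bad events *)

Definition enum (n : nat) : G :=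
  nth (snd (Cantor.of_nat n)) (map (@wprod G) (words_upto (fst (Cantor.of_nat n)))) one.

Lemma enum_surj g : exists n, enum n = g.
Proof.
  destruct (gens_generates g) as [w [Hw <-]].
  assert (Hwu : In w (words_upto (length w))) by (apply in_words_upto; auto).
  destruct (In_nth _ _ [] Hwu) as [j [_ Hj]].
  exists (Cantor.to_nat (length w, j)); unfold enum; rewrite Cantor.cancel_of_to; simpl.
  change one with (@wprod G []); now rewrite map_nth, Hj.
Qed.

Definition index (g : G) : nat := proj1_sig (constructive_indefinite_description _ (enum_surj g)).

Lemma enum_index g : enum (index g) = g.
Proof. unfold index; destruct (constructive_indefinite_description _ _); auto. Qed.

Lemma index_inj g h : index g = index h -> g = h.
Proof. intros E; now rewrite <- (enum_index g), <- (enum_index h), E. Qed.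

Definition test_set (c : G) : list G :=
  proj1_sig (constructive_indefinite_description _
    (separated_sublist c (ball (1000 * word_length c)) (ball_NoDup _))).

Lemma test_set_spec c :
  NoDup (test_set c) /\ incl (test_set c) (ball (1000 * word_length c)) /\
  ball_size (1000 * word_length c) <= 3 * length (test_set c) /\
  forall t t', In t (test_set c) -> In t' (test_set c) -> t <> t' -> t <> c ** t'.
Proof. unfold test_set; destruct (constructive_indefinite_description _ _); auto. Qed.

Definition code (q : G * G) : nat := Cantor.to_nat (index (fst q), index (snd q)).

Definition decode (n : nat) : G * G :=
  (enum (fst (Cantor.of_nat n)), enum (snd (Cantor.of_nat n))).

Lemma decode_code q : decode (code q) = q.
Proof.
  unfold decode, code; rewrite Cantor.cancel_of_to; simpl.
  rewrite !enum_index; now destruct q.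
Qed.

(* The events are indexed by codes of pairs [(g, c)] with [c <> 1]; other
   indices carry the empty event. *)
Definition is_event (n : nat) : Prop := code (decode n) = n /\ snd (decode n) <> one.

Lemma is_event_code g c : c <> one -> is_event (code (g, c)).
Proof. intros Hc; unfold is_event; now rewrite decode_code. Qed.

Lemma is_event_inj n n' : is_event n -> is_event n' -> decode n = decode n' -> n = n'.
Proof. intros [Hn _] [Hn' _] E; now rewrite <- Hn, <- Hn', E. Qed.

Definition event_points (q : G * G) : list G := test_points (fst q) (snd q) (test_set (snd q)).

Definition event_pairs (q : G * G) : list (nat * nat) :=
  map (fun t => (index (fst q ** t), index (fst q ** (snd q ** t)))) (test_set (snd q)).

Lemma pairs_support_event_pairs q : pairs_support (event_pairs q) = map index (event_points q).
Proof.
  unfold event_pairs, event_points, test_points; induction (test_set (snd q)) as [|t T IH];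
    simpl; auto; now rewrite IH.
Qed.

Lemma event_points_translate q y :
  In y (event_points q) -> In (ginv G (fst q) ** y) (ball (1001 * word_length (snd q))).
Proof.
  destruct q as [g c]; unfold event_points; cbn [fst snd]; intros Hy.
  apply in_test_points in Hy as [t [Ht [-> | ->]]]; rewrite gmul_inv_cancel_l;
    apply (proj1 (proj2 (test_set_spec c))) in Ht.
  - apply (incl_ball (1000 * word_length c)); [lia | exact Ht].
  - rewrite Nat.mul_succ_l, Nat.add_comm; apply ball_mul; [apply in_ball_word_length | exact Ht].
Qed.

Definition event_bad (n : nat) : (nat -> bool) -> bool :=
  if excluded_middle_informative (is_event n)
  then all_eqb_bits (event_pairs (decode n)) else fun _ => false.

Definition event_support (n : nat) : list nat :=
  if excluded_middle_informative (is_event n)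
  then pairs_support (event_pairs (decode n)) else [].

Definition weight (k : nat) : R := (/ 2 ^ (ball_size (1000 * k) / 12))%R.

Definition event_weight (n : nat) : R :=
  if excluded_middle_informative (is_event n)
  then weight (word_length (snd (decode n))) else 0%R.

Definition event_prob (n : nat) : R :=
  if excluded_middle_informative (is_event n)
  then (/ 2 ^ length (test_set (snd (decode n))))%R else 0%R.

Lemma depends_on_event_bad n : depends_on (event_support n) (event_bad n).
Proof.
  unfold event_bad, event_support; destruct (excluded_middle_informative _);
    [apply depends_on_all_eqb_bits | intros b b' _; auto].
Qed.

Lemma weight_le_half k : 1 <= k -> (weight k <= 1/2)%R.
Proof.
  intros Hk; unfold weight.
  assert (H12 : 1 <= ball_size (1000 * k) / 12).
  { apply Nat.div_le_lower_bound; [lia|]; pose proof (ball_size_gt (1000 * k)); lia. }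
  apply Rinv_pow2_le in H12; rewrite pow_1 in H12; lra.
Qed.

Lemma event_x_range n : (0 <= event_weight n <= 1/2)%R.
Proof.
  unfold event_weight; destruct (excluded_middle_informative _) as [[_ Hc]|]; [|lra].
  split; [left; apply Rinv_pow2_pos | apply weight_le_half, word_length_pos, Hc].
Qed.

Lemma card_event_bad n N : (forall i, In i (event_support n) -> i < N) ->
  (INR (card_sat N (event_bad n)) <= event_prob n * 2 ^ N)%R.
Proof.
  unfold event_bad, event_support, event_prob.
  destruct (excluded_middle_informative _) as [[_ Hc]|]; intros HN.
  - destruct (test_set_spec (snd (decode n))) as [Hnd [_ [_ Hsep]]].
    assert (Hsupp : NoDup (pairs_support (event_pairs (decode n)))).
    { rewrite pairs_support_event_pairs; apply NoDup_map_NoDup_ForallPairs.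
      - intros a b _ _; apply index_inj.
      - apply test_points_NoDup; auto. }
    assert (H := card_sat_all_eqb_bits _ N Hsupp HN).
    unfold event_pairs at 2 in H; rewrite length_map in H.
    apply (f_equal INR) in H; rewrite mult_INR, !INR_pow2 in H; rewrite <- H.
    assert (0 < 2 ^ length (test_set (snd (decode n))))%R by (apply pow_lt; lra).
    right; field; lra.
  - rewrite card_sat_false by auto; simpl; lra.
Qed.

Lemma weight_ball_le k : 1 <= k ->
  (INR (ball_size (1001 * k) * ball_size k) * weight k <= / 2 ^ (k + 5))%R.
Proof.
  intros Hk; apply Rinv_pow2_mul_le.
  set (beta := ball_size (1000 * k)).
  assert (Hbeta : 1000 * k <= beta) by (pose proof (ball_size_gt (1000 * k)); lia).
  assert (Hk_beta : ball_size k <= beta) by (apply ball_size_le; lia).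
  assert (H1001 : ball_size (1001 * k) <= beta * ball_size k).
  { rewrite Nat.mul_succ_l; apply ball_size_add. }
  eapply Nat.le_trans; [|apply cube_mul_pow2_le; eauto].
  apply Nat.mul_le_mono_r; simpl; rewrite Nat.mul_1_r, Nat.mul_assoc.
  apply Nat.mul_le_mono; [eapply Nat.le_trans; [exact H1001|] | exact Hk_beta].
  apply Nat.mul_le_mono_l, Hk_beta.
Qed.

Definition candidates (P : list G) (k : nat) : list G :=
  map (fun q => fst q ** ginv G (snd q)) (list_prod P (ball (1001 * k))).

(* Over-approximates the labels [(|c|, (g, c))] of the events touching [P]. *)
Definition touching_pairs (P : list G) (K : nat) : list (nat * (G * G)) :=
  flat_map (fun k => map (pair k) (list_prod (candidates P k) (ball k))) (seq 1 K).

Lemma sum_weight_touching_pairs P K :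
  (sumR (map (fun q => weight (fst q)) (touching_pairs P K)) <= INR (length P) / 32)%R.
Proof.
  unfold touching_pairs; rewrite sumR_flat_map.
  apply Rle_trans with (sumR (map (fun k => INR (length P) * / 2 ^ (k + 5)) (seq 1 K)))%R.
  - apply sumR_le; intros k Hk; apply in_seq in Hk as [Hk _].
    rewrite map_map; simpl; rewrite sumR_const.
    unfold candidates; rewrite !length_prod, length_map, length_prod.
    rewrite <- Nat.mul_assoc, mult_INR, Rmult_assoc.
    apply Rmult_le_compat_l; [apply pos_INR | apply weight_ball_le, Hk].
  - rewrite sumR_scal_l; assert (H := sum_Rinv_pow2_shift K); pose proof (pos_INR (length P)).
    unfold Rdiv; apply Rmult_le_compat_l; lra.
Qed.

Lemma sum_event_x_touching (P : list G) L : NoDup L ->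
  (forall f, In f L -> is_event f /\ exists y, In y P /\ In y (event_points (decode f))) ->
  (sumR (map event_weight L) <= INR (length P) / 32)%R.
Proof.
  intros Hnd HL.
  set (label := fun f => (word_length (snd (decode f)), decode f)).
  set (K := list_max (map (fun f => word_length (snd (decode f))) L)).
  assert (Hx : map event_weight L = map (fun q => weight (fst q)) (map label L)).
  { rewrite map_map; apply map_ext_in; intros f Hf; unfold event_weight.
    destruct (excluded_middle_informative _) as [_|Hf'];
      [reflexivity | exfalso; apply Hf', HL, Hf]. }
  rewrite Hx; eapply Rle_trans; [|apply (sum_weight_touching_pairs P K)].
  apply sumR_incl; [intros; left; apply Rinv_pow2_pos| |].
  - apply NoDup_map_NoDup_ForallPairs; auto.
    intros f f' Hf Hf' E; apply (f_equal snd) in E; change (decode f = decode f') in E.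
    apply is_event_inj; [apply HL, Hf | apply HL, Hf' | exact E].
  - intros q Hq; apply in_map_iff in Hq as [f [<- Hf]].
    destruct (HL f Hf) as [[_ Hc] [y [Hy Hyf]]].
    unfold touching_pairs; apply in_flat_map.
    exists (word_length (snd (decode f))); split.
    + apply in_seq; split; [apply word_length_pos, Hc|].
      assert (word_length (snd (decode f)) <= K)
        by (apply le_list_max, in_map_iff; eauto); lia.
    + unfold label; apply in_map; rewrite (surjective_pairing (decode f)); apply in_prod;
        [|apply in_ball_word_length].
      apply in_map_iff; exists (y, ginv G (fst (decode f)) ** y); cbn [fst snd]; split.
      * rewrite <- (gmul_cancel_inv_l (fst (decode f)) y) at 1; apply gmul_inv_cancel_r.
      * apply in_prod; auto; apply event_points_translate, Hyf.
Qed.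

Lemma event_local_condition n L : NoDup L ->
  (forall f, In f L -> f <> n /\ exists i, In i (event_support n) /\ In i (event_support f)) ->
  (event_prob n <= event_weight n * prodR (map (fun f => 1 - event_weight f) L))%R.
Proof.
  intros Hnd HL; unfold event_prob.
  destruct (excluded_middle_informative (is_event n)) as [Hn|Hn].
  2:{ apply Rmult_le_pos; [apply event_x_range|].
      apply (prod_compl_nonneg event_weight); intros f; pose proof (event_x_range f); lra. }
  set (q := decode n); set (m := length (test_set (snd q))).
  assert (Htouch : forall f, In f L ->
            is_event f /\ exists y, In y (event_points q) /\ In y (event_points (decode f))).
  { intros f Hf; destruct (HL f Hf) as [_ [i [Hin Hif]]].
    unfold event_support in Hin, Hif.
    destruct (excluded_middle_informative (is_event n)); [|contradiction].
    destruct (excluded_middle_informative (is_event f)) as [Hf'|]; [|destruct Hif].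
    rewrite pairs_support_event_pairs in Hin, Hif.
    apply in_map_iff in Hin as [y [<- Hy]]; apply in_map_iff in Hif as [y' [E Hy']].
    apply index_inj in E; subst y'; eauto. }
  assert (Hsum := sum_event_x_touching _ L Hnd Htouch).
  unfold event_points in Hsum at 1; rewrite length_test_points, mult_INR in Hsum.
  assert (Hprod := prod_compl_ge_exp event_weight L (fun f _ => event_x_range f)).
  assert (Hxn : (/ 2 ^ (m / 4) <= event_weight n)%R).
  { unfold event_weight; destruct (excluded_middle_informative (is_event n)); [|contradiction].
    apply Rinv_pow2_le; fold q m.
    destruct (test_set_spec (snd q)) as [_ [_ [Hball _]]]; fold m in Hball.
    rewrite <- (Nat.Div0.div_mul_cancel_l m 4 3) by lia.
    apply Nat.Div0.div_le_mono; lia. }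
  eapply Rle_trans; [apply Rinv_pow2_le_split|].
  apply Rmult_le_compat; [left; apply Rinv_pow2_pos | left; apply exp_pos | exact Hxn|].
  eapply Rle_trans; [|exact Hprod]; apply exp_le_compat.
  change (INR 2) with 2%R in Hsum; fold m in Hsum; lra.
Qed.

Lemma separating_assignment : exists b : nat -> bool, forall g c, c <> one ->
  exists t, In t (test_set c) /\ b (index (g ** t)) <> b (index (g ** (c ** t))).
Proof.
  destruct (local_lemma event_bad event_support event_weight event_prob depends_on_event_bad)
    as [b Hb].
  - intros n; pose proof (event_x_range n); lra.
  - apply card_event_bad.
  - apply event_local_condition.
  - exists b; intros g c Hc.
    specialize (Hb (code (g, c))); unfold event_bad in Hb.
    destruct (excluded_middle_informative _) as [_|Hn]; [|exfalso; apply Hn, is_event_code, Hc].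
    rewrite decode_code in Hb; apply NNPP; intros Hnone.
    assert (Hall : all_eqb_bits (event_pairs (g, c)) b = true).
    { apply forallb_forall; intros p Hp; apply in_map_iff in Hp as [t [<- Ht]].
      unfold eqb_bits; simpl; apply eqb_true_iff.
      apply NNPP; intros Hne; apply Hnone; eauto. }
    congruence.
Qed.
End CayleyGraph.

Open Scope R_scope.

Theorem mainTheorem3 :
  exists A : R, 1 <= A /\
  forall (G : Group) (S : list G),
    @infinite_group G -> symmetric S -> generates S ->
    exists xi : G -> bool,
      forall (k : nat) (g h : G), (1 <= k)%nat -> dist_eq S g h k ->
        exists (t : G) (n : nat),
          wlen_eq S t n /\ INR n <= INR k * A /\
          xi (gmul G g t) <> xi (gmul G h t).
Proof.
  exists (INR 1000); split; [apply (le_INR 1); lia|]; intros G S Hinf Hsym Hgen.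
  destruct (separating_assignment S Hgen Hinf) as [b Hb].
  exists (fun x => b (index S Hgen x)); intros k g h Hk Hgh.
  set (c := gmul G (ginv G g) h).
  assert (Hlen : word_length S Hgen c = k).
  { apply (dist_eq_unique S (gone G) c); [apply word_length_spec | apply dist_eq_translate, Hgh]. }
  assert (Hc : c <> gone G).
  { intros Hc1; rewrite Hc1, word_length_one in Hlen; lia. }
  destruct (Hb g c Hc) as [t [Ht Hne]].
  apply (proj1 (proj2 (test_set_spec S Hgen c))) in Ht; rewrite Hlen in Ht.
  destruct (in_ball_wlen_eq S Hsym t _ Ht) as [n [Hn Hw]].
  exists t, n; split; [exact Hw | split].
  - rewrite <- mult_INR; apply le_INR; lia.
  - replace (gmul G h t) with (gmul G g (gmul G c t)); auto.
    unfold c; now rewrite gmul_assoc, gmul_cancel_inv_l.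
Qed.
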